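(* Consider an instance of \textbf{LTSP} in which there is $k\in\mathbb N$ such that $s(f)=k$ and $n(f)\le 1$ for every file $f\in\mathcal F$. Then $\mathcal B_1=\{(f,f): f\in\mathcal F\setminus\{f_1\},\ n(f)=1\}$ is optimal, i.e., $v(\mathcal B_1)\le v(\mathcal B_1')$ for every set $\mathcal B_1'$ of mini-batches not containing the leftmost file $f_1$.
   Context: A single-track tape stores a sequence of files $\mathcal F=(f_1,\dots,f_n)$ laid out contiguously from left to right: file $f$ occupies blocks $l(f),\dots,r(f)$, has size $s(f)=r(f)-l(f)+1$, $l(f_1)=1$, $l(f_{i+1})=r(f_i)+1$, and $m=\sum_f s(f)$. The tape moves one block per time step; at time $0$ the head is at position $m$. A file is read when the head traverses it rightwards from $l(f)$ to $r(f)$. $\mathcal R$ is a finite set of requests, all released at time $0$, each associated with a file $f(r)$; $\mathcal R(f)$ is the set of requests for $f$ and $n(f)=|\mathcal R(f)|$. A request's response time is the time at which the head starts a rightward reading traversal of its file (all pending requests of a file are serviced simultaneously). \textbf{LTSP} asks to minimize the sum of response times. A mini-batch is a pair $b=(f,f')$ of files with $l(f)\le l(f')$; $l(b)=l(f)$, $r(b)=r(f')$, $s(b)=r(b)-l(b)+1$, and $\mathcal F(b)$ is the set of files $g$ with $l(b)\le l(g)$ and $r(g)\le r(b)$; it is atomic if $|\mathcal F(b)|=1$. Given a set $\mathcal B_1$ of mini-batches, the associated schedule is: Phase 1, the head moves leftwards from $m$ to position $1$, and whenever it reaches $l(b)$ for some $b\in\mathcal B_1$ it executes $b$ (moves rightwards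 from $l(b)$ to $r(b)$, reading every file of $\mathcal F(b)$, then returns to $l(b)$) before continuing leftwards; Phase 2, the head moves rightwards from position $1$ to $m$, reading every file. $v(\mathcal B_1)$ denotes the total response time of this schedule. Convention of the paper: the leftmost file of the tape starts Phase 2 and never belongs to a mini-batch of Phase 1. *)

From mathcomp Require Import all_boot.
Set Implicit Arguments.
Unset Strict Implicit.
Unset Printing Implicit Defensive.

(* Files of a tape with [n] files are indexed by ['I_n] (left to right);
   [s : 'I_n -> nat] gives the file sizes (in blocks). *)

Definition lpos n (s : 'I_n -> nat) (i : 'I_n) : nat :=
  1 + \sum_(j < n | j < i) s j.
Definition rpos n (s : 'I_n -> nat) (i : 'I_n) : nat := lpos s i + s i - 1.
Definition tape_len n (s : 'I_n -> nat) : nat := \sum_(j < n) s j.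

Definition batch n := ('I_n * 'I_n)%type.
Definition is_minibatch n (s : 'I_n -> nat) (b : batch n) : bool :=
  lpos s b.1 <= lpos s b.2.
Definition lb n (s : 'I_n -> nat) (b : batch n) : nat := lpos s b.1.
Definition rb n (s : 'I_n -> nat) (b : batch n) : nat := rpos s b.2.
Definition in_batch n (s : 'I_n -> nat) (b : batch n) (g : 'I_n) : bool :=
  (lb s b <= lpos s g) && (rpos s g <= rb s b).

(* Order of execution in Phase 1: the head moves leftwards, so batches with a
   larger left end are executed first; batches with the same left end (a
   degenerate situation) are executed by increasing right end. *)
Definition batch_before n (s : 'I_n -> nat) (b' b : batch n) : bool :=
  (lb s b < lb s b') || ((lb s b' == lb s b) && (rb s b' < rb s b)).

(* executing b: move right from l(b) to r(b), then back to l(b) *)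
Definition detour n (s : 'I_n -> nat) (b : batch n) : nat := 2 * (rb s b - lb s b).

(* time at which the head reaches l(b) and starts executing b *)
Definition start_time n (s : 'I_n -> nat) (B : {set batch n}) (b : batch n) : nat :=
  (tape_len s - lb s b) + \sum_(b' in B | batch_before s b' b) detour s b'.

(* time at which Phase 1 ends (head at position 1) *)
Definition phase1_end n (s : 'I_n -> nat) (B : {set batch n}) : nat :=
  (tape_len s - 1) + \sum_(b in B) detour s b.

(* response time of file g: first time a rightward reading traversal of g
   starts (in some executed batch containing g, or in Phase 2). *)
Definition resp_time n (s : 'I_n -> nat) (B : {set batch n}) (g : 'I_n) : nat :=
  \big[minn/ phase1_end s B + (lpos s g - 1)]_(b in B | in_batch s b g)
     (start_time s B b + (lpos s g - lb s b)).

(* requests: a finite type R with f(r) given by fr *)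
Definition nreq n (R : finType) (fr : R -> 'I_n) (g : 'I_n) : nat :=
  #|[pred q | fr q == g]|.

Definition total_resp n (R : finType) (fr : R -> 'I_n) (s : 'I_n -> nat)
  (B : {set batch n}) : nat :=
  \sum_(q : R) resp_time s B (fr q).

(* B_1 = {(f,f) : f <> f_1, n(f) = 1}, with f_1 = ord0 *)
Definition atomic_B1 n (R : finType) (fr : R -> 'I_n.+1) : {set batch n.+1} :=
  [set b | (b.1 == b.2) && (b.1 != ord0) && (nreq fr b.1 == 1)].

(* With all files of size k, the head needs time m - l(g) just to reach l(g),
   and every other file h read no later than g delays g by at least 2(k - 1):
   either h lies left of g in g's own batch (or in Phase 2), which costs a round
   trip of length k, or h was read in a batch executed earlier, whose detour
   costs at least 2(k - 1) per file it contains.  Hence every schedule has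
   r(g) >= m - l(g) + 2(k - 1) #{h <> g | r(h) <= r(g)}, while B_1 achieves
   r(g) <= m - l(g) + 2(k - 1) #{requested h | h > g}.  Summed over the
   requested files, every schedule pays 2(k - 1) at least once per pair of
   requested files, and B_1 pays it exactly once. *)

From mathcomp Require Import all_boot all_order zify.
Set Implicit Arguments.
Unset Strict Implicit.
Unset Printing Implicit Defensive.
Import Order.TTheory.

Lemma bigmin_nat_attained (I : finType) (P : pred I) (F : I -> nat) x0 :
  \big[minn/x0]_(i | P i) F i = x0 \/
  exists2 i, P i & \big[minn/x0]_(i | P i) F i = F i.
Proof.
elim/big_ind: _ => [|a b ha hb|i Pi]; [by left | by case: leqP | by right; exists i].
Qed.

Lemma card_bigcup_le (I T : finType) (P : pred I) (F : I -> {set T}) :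
  #|\bigcup_(i | P i) F i| <= \sum_(i | P i) #|F i|.
Proof.
elim/big_ind2: _ => [|a U b V hU hV|//]; first by rewrite cards0.
by rewrite (leq_trans (leq_card_setU U V)) // leq_add.
Qed.

Lemma card_set_in_sum (T : finType) (A : {set T}) (P : pred T) :
  #|[set x in A | P x]| = \sum_(x in A) P x.
Proof. by rewrite -sum1dep_card big_mkcondr /=; apply: eq_bigr => x _; case: (P x). Qed.

Lemma card_ord_range_le n a b : #|[set h : 'I_n | a <= h < b]| <= b - a.
Proof.
rewrite cardE -(size_map val (enum _)) -(size_iota a (b - a)) uniq_leq_size //.
  by rewrite (map_inj_uniq val_inj) enum_uniq.
move=> x /mapP [h]; rewrite mem_enum inE => /andP [ha hb] ->.
by rewrite mem_iota ha subnKC // ltnW // (leq_ltn_trans ha hb).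
Qed.

Lemma sum_card_lt_le_sum_card_le n (Q : {set 'I_n}) (r : 'I_n -> nat) :
  \sum_(g in Q) #|[set h in Q | g < h]| <=
  \sum_(g in Q) #|[set h in Q | (h != g) && (r h <= r g)]|.
Proof.
under eq_bigr do rewrite card_set_in_sum.
under [X in _ <= X]eq_bigr do rewrite card_set_in_sum.
rewrite -leq_double -!addnn.
rewrite [X in _ <= _ + X]exchange_big [X in _ + X <= _]exchange_big -!big_split /=.
apply: leq_sum => g _; rewrite -!big_split /=; apply: leq_sum => h _.
case: (eqVneq g h) => [->|ne]; first by rewrite ltnn.
have -> : (g < h) + (h < g) = 1 by case: ltngtP ne => // /val_inj ->; rewrite eqxx.
by case: (leqP (r h) (r g)) => // /ltnW ->; rewrite addn1.
Qed.

Definition phase2_time n (s : 'I_n -> nat) (B : {set batch n}) (g : 'I_n) : nat :=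
  phase1_end s B + (lpos s g - 1).

Definition batch_read_time n (s : 'I_n -> nat) (B : {set batch n}) (b : batch n)
    (g : 'I_n) : nat :=
  start_time s B b + (lpos s g - lb s b).

Definition detours_before n (s : 'I_n -> nat) (B : {set batch n}) (b : batch n) : nat :=
  \sum_(b' in B | batch_before s b' b) detour s b'.

Definition batch_files n (s : 'I_n -> nat) (b : batch n) : {set 'I_n} :=
  [set h | in_batch s b h].

Section Schedule.

Variables (n : nat) (s : 'I_n -> nat) (B : {set batch n}).

Lemma resp_timeE g :
  resp_time s B g =
  \big[minn/phase2_time s B g]_(b in B | in_batch s b g) batch_read_time s B b g.
Proof. by []. Qed.

Lemma resp_time_le_phase2 g : resp_time s B g <= phase2_time s B g.
Proof. by rewrite resp_timeE -minEnat -leEnat bigmin_le_id. Qed.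

Lemma resp_time_le_batch b g :
  b \in B -> in_batch s b g -> resp_time s B g <= batch_read_time s B b g.
Proof.
by move=> bB gb; rewrite resp_timeE -minEnat -leEnat bigmin_le_cond ?bB.
Qed.

Lemma resp_time_cases g :
  resp_time s B g = phase2_time s B g \/
  exists2 b, (b \in B) && in_batch s b g & resp_time s B g = batch_read_time s B b g.
Proof. exact: bigmin_nat_attained. Qed.

Lemma resp_time_ge_distance g : tape_len s - lpos s g <= resp_time s B g.
Proof.
have [-> | [b /andP [_ /andP [gb _]] ->]] := resp_time_cases g.
  by rewrite /phase2_time /phase1_end /lpos; lia.
by rewrite /batch_read_time /start_time; lia.
Qed.

Lemma batch_before_irr b : ~~ batch_before s b b.
Proof. by rewrite /batch_before; lia. Qed.

Lemma batch_before_trans b1 b2 b3 :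
  batch_before s b1 b2 -> batch_before s b2 b3 -> batch_before s b1 b3.
Proof. by rewrite /batch_before; lia. Qed.

Lemma detours_before_add_le b (P : pred (batch n)) :
  b \in B -> P b -> (forall b', batch_before s b' b -> P b') ->
  detours_before s B b + detour s b <= \sum_(b' in B | P b') detour s b'.
Proof.
move=> bB Pb PB; rewrite [X in _ <= X](bigD1 b) /=; last by rewrite bB Pb.
rewrite addnC leq_add2l.
apply: sub_le_big => [//|x y|b' /andP [b'B before_b'b]]; first exact: leq_addr.
rewrite b'B PB //=; apply: contraNneq (batch_before_irr b) => eb'.
by rewrite -{1}eb'.
Qed.

Lemma batch_read_time_lt_phase2 b g h :
  b \in B -> lpos s g - lb s b < detour s b ->
  batch_read_time s B b g < phase2_time s B h.
Proof.
move=> bB offset_lt.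
have := detours_before_add_le (P := predT) bB erefl (fun _ _ => erefl).
rewrite (eq_bigl (fun b => b \in B)) => [|b']; last by rewrite andbT.
move: offset_lt; rewrite /batch_read_time /start_time /phase2_time /phase1_end.
rewrite -/(detours_before s B b) /lb /lpos; lia.
Qed.

Lemma batch_read_time_lt_later b b' g h :
  b \in B -> batch_before s b b' -> lpos s g - lb s b < detour s b ->
  batch_read_time s B b g < batch_read_time s B b' h.
Proof.
move=> bB before_bb' offset_lt.
have := detours_before_add_le (P := batch_before s ^~ b') bB before_bb'
  (fun b'' before_b''b => batch_before_trans before_b''b before_bb').
move: before_bb' offset_lt; rewrite /batch_read_time /start_time /batch_before.
by rewrite -/(detours_before s B b) -/(detours_before s B b'); lia.
Qed.

End Schedule.

Definition singly_requested n (R : finType) (fr : R -> 'I_n) : {set 'I_n} :=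
  [set g | nreq fr g == 1].

Lemma total_resp_singly n (R : finType) (fr : R -> 'I_n) (s : 'I_n -> nat)
    (B : {set batch n}) :
  (forall f, nreq fr f <= 1) ->
  total_resp fr s B = \sum_(g in singly_requested fr) resp_time s B g.
Proof.
move=> nreq_le1; rewrite /total_resp (partition_big fr xpredT) //= [RHS]big_mkcond /=.
apply: eq_bigr => g _; rewrite inE.
rewrite (eq_bigr (fun _ => resp_time s B g)) => [|q /eqP -> //].
rewrite (eq_bigl [pred q | fr q == g]) // sum_nat_const -/(nreq fr g).
by have := nreq_le1 g; case: (nreq fr g) => [|[|]] // _; rewrite ?mul0n ?mul1n.
Qed.

Section UniformSizes.

Variables (n k : nat) (s : 'I_n -> nat).
Hypotheses (s_const : forall f, s f = k) (k_gt0 : 0 < k).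

Lemma lposE i : lpos s i = (i * k).+1.
Proof.
rewrite /lpos (eq_bigr (fun _ => k)) //.
by rewrite -(big_ord_widen _ (fun _ => k) (ltnW (ltn_ord i))) sum_nat_const card_ord.
Qed.

Lemma rposE i : rpos s i = i * k + k.
Proof. by rewrite /rpos lposE s_const addSn subn1. Qed.

Lemma tape_lenE : tape_len s = n * k.
Proof.
by rewrite /tape_len (eq_bigr _ (fun f _ => s_const f)) sum_nat_const card_ord.
Qed.

Lemma leq_lpos h g : (lpos s h <= lpos s g) = (h <= g).
Proof. by rewrite !lposE ltnS leq_pmul2r. Qed.

Lemma in_batchE b h : in_batch s b h = (b.1 <= h <= b.2).
Proof. by rewrite /in_batch /lb /rb leq_lpos !rposE leq_add2r leq_pmul2r. Qed.

Lemma detour_ge_card_batch_files b : 2 * (k - 1) * #|batch_files s b| <= detour s b.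
Proof.
have : #|batch_files s b| <= b.2.+1 - b.1.
  by apply: leq_trans (card_ord_range_le _ _ _); apply/subset_leq_card/subsetP => h;
    rewrite !inE in_batchE ltnS.
rewrite /detour /lb /rb lposE rposE; nia.
Qed.

Lemma batch_before_total b b' : b != b' -> batch_before s b b' || batch_before s b' b.
Proof.
case: b b' => [x1 x2] [y1 y2]; apply: contraNT; rewrite negb_or.
rewrite /batch_before /lb /rb !lposE !rposE /= => incomparable.
have /eqP : x1 * k = y1 * k by lia.
have /eqP : x2 * k = y2 * k by lia.
by rewrite !eqn_pmul2r // => /eqP/val_inj -> /eqP/val_inj ->.
Qed.

Lemma batch_before_diag g h : batch_before s (h, h) (g, g) = (g < h).
Proof.
rewrite /batch_before /lb /rb !lposE !rposE /= ltnS ltn_pmul2r // eqSS eqn_pmul2r //.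
by case: ltngtP => // ->; rewrite ltnn.
Qed.

Lemma offset_lt_detour b g :
  1 < k -> in_batch s b g -> lpos s g - lb s b < detour s b.
Proof. by rewrite in_batchE /detour /lb /rb !lposE rposE; nia. Qed.

Section LowerBound.

Variable B : {set batch n}.

Lemma card_early_files (X S : {set 'I_n}) (P : pred (batch n)) :
  S \subset X :|: \bigcup_(b | P b) batch_files s b ->
  2 * (k - 1) * #|S| <= 2 * (k - 1) * #|X| + \sum_(b | P b) detour s b.
Proof.
move=> /subset_leq_card cardS.
have cardU := (leq_card_setU X (\bigcup_(b | P b) batch_files s b)).1.
have cover_le := card_bigcup_le P (batch_files s).
have files_le :
    2 * (k - 1) * \sum_(b | P b) #|batch_files s b| <= \sum_(b | P b) detour s b.
  by rewrite big_distrr; apply: leq_sum => b _; apply: detour_ge_card_batch_files.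
apply: leq_trans (leq_add (leqnn _) files_le); rewrite -mulnDr leq_mul2l.
by rewrite (leq_trans cardS) ?orbT // (leq_trans cardU) // leq_add2l.
Qed.

Lemma early_files_phase2 g :
  [set h | (h != g) && (resp_time s B h <= phase2_time s B g)] \subset
  [set h : 'I_n | 0 <= h < g] :|: \bigcup_(b | b \in B) batch_files s b.
Proof.
apply/subsetP => h; rewrite !inE => /andP [hg].
have [-> | [b /andP [bB hb] _]] := resp_time_cases s B h.
  rewrite /phase2_time leq_add2l !lposE !subn1 /= leq_pmul2r // => hle.
  by rewrite ltn_neqAle val_eqE hg hle.
by move=> _; apply/orP; right; apply/bigcupP; exists b; rewrite ?inE.
Qed.

Lemma early_files_batch b g : 1 < k -> b \in B -> in_batch s b g ->
  [set h | (h != g) && (resp_time s B h <= batch_read_time s B b g)] \subset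
  [set h : 'I_n | b.1 <= h < g] :|:
    \bigcup_(b' | (b' \in B) && batch_before s b' b) batch_files s b'.
Proof.
move=> k_gt1 bB gb; have offset_lt := offset_lt_detour k_gt1 gb.
apply/subsetP => h; rewrite !inE => /andP [hg].
have [-> | [b' /andP [b'B hb'] ->]] := resp_time_cases s B h.
  by rewrite leqNgt batch_read_time_lt_phase2.
case: (eqVneq b' b) => [eb | nb].
  move: hb'; rewrite eb in_batchE => /andP [b1h _].
  have b1g : b.1 <= g by move: gb; rewrite in_batchE => /andP [].
  rewrite /batch_read_time leq_add2l leq_sub2rE /lb ?leq_lpos // => h_le_g.
  by rewrite b1h ltn_neqAle val_eqE hg h_le_g.
case/orP: (batch_before_total nb) => [before_b'b | before_bb'].
  by move=> _; apply/orP; right; apply/bigcupP; exists b'; rewrite ?b'B ?inE.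
by rewrite leqNgt batch_read_time_lt_later.
Qed.

Lemma resp_time_lower_bound g :
  tape_len s - lpos s g +
    2 * (k - 1) * #|[set h | (h != g) && (resp_time s B h <= resp_time s B g)]|
  <= resp_time s B g.
Proof.
have [k_le1 | k_gt1] := leqP k 1.
  by rewrite (eqP k_le1 : k - 1 = 0) muln0 mul0n addn0 resp_time_ge_distance.
have g_lt_n := ltn_ord g.
have [-> | [b /andP [bB gb] ->]] := resp_time_cases s B g.
  have := card_early_files (early_files_phase2 g).
  have := leq_mul (leqnn (k - 1)) (card_ord_range_le n 0 g).
  rewrite /phase2_time /phase1_end tape_lenE lposE.
  set cX := #|_|; set cS := #|_|; set D := \sum_(b in B) _.
  nia.
have := card_early_files (early_files_batch k_gt1 bB gb).
have := leq_mul (leq_subr 1 k) (card_ord_range_le n b.1 g).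
move: gb; rewrite in_batchE => /andP [b1g _].
rewrite /batch_read_time /start_time -/(detours_before s B b) /lb tape_lenE !lposE.
case: b bB b1g => [b1 b2] /= _ b1g.
set cX := #|_|; set cS := #|_|; set D := detours_before _ _ _.
nia.
Qed.

End LowerBound.

Lemma total_resp_ge (R : finType) (fr : R -> 'I_n) (B : {set batch n}) :
  (forall f, nreq fr f <= 1) ->
  \sum_(g in singly_requested fr) (tape_len s - lpos s g) +
    2 * (k - 1) * \sum_(g in singly_requested fr)
      #|[set h in singly_requested fr |
         (h != g) && (resp_time s B h <= resp_time s B g)]|
  <= total_resp fr s B.
Proof.
move=> nreq_le1; rewrite total_resp_singly // big_distrr -big_split.
apply: leq_sum => g _; apply: leq_trans (resp_time_lower_bound B g).
rewrite leq_add2l leq_mul2l; apply/orP; right.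
by apply/subset_leq_card/subsetP => h; rewrite !inE => /andP [_ ->].
Qed.

End UniformSizes.

Section AtomicBatches.

Variables (n k : nat) (s : 'I_n.+1 -> nat) (R : finType) (fr : R -> 'I_n.+1).
Hypotheses (s_const : forall f, s f = k) (k_gt0 : 0 < k).

Local Notation Q := (singly_requested fr).

Lemma atomic_B1E : atomic_B1 fr = [set (h, h) | h in Q :\ ord0].
Proof.
apply/setP => -[x y]; rewrite !inE /=; apply/idP/imsetP => [|[h]].
  by move=> /andP [/andP [/eqP <- x0] xQ]; exists x; rewrite // !inE x0.
by rewrite !inE => /andP [h0 hQ] [-> ->]; rewrite eqxx h0.
Qed.

Lemma sum_detour_atomic_B1 (P : pred (batch n.+1)) :
  \sum_(b in atomic_B1 fr | P b) detour s b =
  2 * (k - 1) * #|[set h in Q :\ ord0 | P (h, h)]|.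
Proof.
rewrite atomic_B1E big_imset_cond => [|x y _ _ [] //].
rewrite (eq_bigr (fun _ => 2 * (k - 1))) => [|h _]; last first.
  by rewrite /detour /lb /rb (lposE s_const) (rposE s_const) /=; lia.
by rewrite [RHS]mulnC -sum_nat_const; apply: eq_bigl => h; rewrite inE.
Qed.

Lemma resp_time_atomic_B1_le g : g \in Q ->
  resp_time s (atomic_B1 fr) g <=
  tape_len s - lpos s g + 2 * (k - 1) * #|[set h in Q | g < h]|.
Proof.
move=> gQ; case: (eqVneq g ord0) => [-> | g_ne0].
  apply: leq_trans (resp_time_le_phase2 _ _ _) _.
  rewrite /phase2_time /phase1_end (lposE s_const) subnn addn0 /= leq_add2l.
  rewrite (eq_bigl (fun b => (b \in atomic_B1 fr) && predT b)) => [|b];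
    last by rewrite andbT.
  rewrite sum_detour_atomic_B1 leq_mul2l; apply/orP; right.
  by apply/subset_leq_card/subsetP => h; rewrite !inE lt0n andbT => /andP [-> ->].
have gA : (g, g) \in atomic_B1 fr by rewrite atomic_B1E imset_f // in_setD1 g_ne0.
apply: leq_trans (resp_time_le_batch gA _) _.
  by rewrite (in_batchE s_const) ?leqnn.
rewrite /batch_read_time /start_time /lb subnn addn0 leq_add2l.
rewrite sum_detour_atomic_B1 leq_mul2l; apply/orP; right.
apply/subset_leq_card/subsetP => h.
by rewrite !inE (batch_before_diag s_const) // => /andP [/andP [_ ->] ->].
Qed.

Lemma total_resp_atomic_B1_le : (forall f, nreq fr f <= 1) ->
  total_resp fr s (atomic_B1 fr) <=
  \sum_(g in Q) (tape_len s - lpos s g) +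
    2 * (k - 1) * \sum_(g in Q) #|[set h in Q | g < h]|.
Proof.
move=> nreq_le1; rewrite total_resp_singly // big_distrr -big_split.
by apply: leq_sum => g; apply: resp_time_atomic_B1_le.
Qed.

End AtomicBatches.

Theorem theorem2 (n k : nat) (s : 'I_n.+1 -> nat) (R : finType)
  (fr : R -> 'I_n.+1) :
  0 < k ->
  (forall f, s f = k) ->
  (forall f, nreq fr f <= 1) ->
  forall B' : {set batch n.+1},
    (forall b, b \in B' -> is_minibatch s b) ->
    (forall b, b \in B' -> ~~ in_batch s b ord0) ->
    total_resp fr s (atomic_B1 fr) <= total_resp fr s B'.
Proof.
move=> k_gt0 s_const nreq_le1 B' _ _.
apply: leq_trans (total_resp_atomic_B1_le s_const k_gt0 nreq_le1) _.
apply: leq_trans (total_resp_ge s_const k_gt0 B' nreq_le1).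
by rewrite leq_add2l leq_mul2l sum_card_lt_le_sum_card_le orbT.
Qed.
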